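(* Let $T\in\overline{\mathrm{Sub}}(X,1)$ and let $r$ be a positive integer with $T\subset B(1,r)$. Then \[ \mathcal{R}(T)=\bigsqcup_{\substack{T_1,T_2\in\mathcal{R}_{r+1}\\ T_1\cap T_2=T}}\mathrm{SCyl}(T_1)\times\mathrm{SCyl}(T_2),\] a disjoint union.
   Context: $N\geq2$, $F_N$ free with free basis $A$, $X$ its Cayley graph (a tree with vertex set $F_N$, unit edge lengths, path metric $d_X$), $\partial X$ its boundary, $B(1,r)=\{x\in X: d_X(1,x)\le r\}$. $\mathcal{C}_N$: closed subsets of $\partial X$ with at least two points. $\mathrm{Conv}(S)$: union of bi-infinite geodesics joining points of $S$. $\overline{\mathrm{Sub}}(X,1)$: finite subtrees of $X$ containing $1$ (including $\{1\}$). $\mathcal{R}(T)=\{(S_1,S_2)\in\mathcal{C}_N^2:\mathrm{Conv}(S_1)\cap\mathrm{Conv}(S_2)=T\}$. For an oriented edge $e$, $\mathrm{Cyl}(e)$ is the set of ends of geodesic rays starting with $e$; for a finite subtree $T'$ with $\geq2$ vertices and terminal edges $e_1,\dots,e_m$ (oriented edges ending at degree-one vertices), $\mathrm{SCyl}(T')=\{S\in\mathcal{C}_N: S\subset\bigcup_i\mathrm{Cyl}(e_i),\ S\cap\mathrm{Cyl}(e_i)\neq\emptyset\ \forall i\}$. For an integer $r\ge1$, $\mathcal{R}_r$ (round graphs of grade $r$ based at $1$) is the set of finite subtrees $T'$ of $X$ containing $1$ such that $1$ has degree $\geq 2$ in $T'$ and every degree-one vertex $u$ of $T'$ satisfies $d_X(1,u)=r$.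 *)

From mathcomp Require Import all_boot.
Set Implicit Arguments. Unset Strict Implicit. Unset Printing Implicit Defensive.

Section FreeTree.
Variable N : nat.

(* A letter is a basis element a_i (false) or its inverse a_i^{-1} (true). *)
Definition letter := ('I_N * bool)%type.
Definition linv (l : letter) : letter := (l.1, ~~ l.2).

(* Finite words; vertices of X = reduced words = elements of F_N. *)
Definition word := seq letter.
Definition reduced (w : word) : bool :=
  match w with
  | [::] => true
  | a :: w' => path (fun x y => y != linv x) a w'
  end.

(* Cayley graph X: g adjacent to g a^{+-1} (right multiplication).
   For reduced words this is: one is the other with one letter appended. *)
Definition adj (u v : word) : Prop :=
  (exists l, v = rcons u l) \/ (exists l, u = rcons v l).

(* Points of the boundary dX: infinite reduced words (ends of geodesic rays
   from 1). *)
Definition bpoint := nat -> letter.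
Definition redInf (xi : bpoint) : Prop := forall n, xi n.+1 != linv (xi n).

Definition prefI (v : word) (xi : bpoint) : Prop := v = mkseq xi (size v).
Definition prefF (v u : word) : Prop := v = take (size v) u.

(* Boundary sets and the class C_N: closed subsets of dX with >= 2 points.
   Closedness w.r.t. the usual (cylinder) topology on dX. *)
Definition bset := bpoint -> Prop.
Definition closedB (S : bset) : Prop :=
  forall xi, redInf xi ->
    (forall n, exists eta, S eta /\ forall k, k < n -> eta k = xi k) -> S xi.
Definition CN (S : bset) : Prop :=
  (forall xi, S xi -> redInf xi) /\ closedB S /\
  exists xi eta, S xi /\ S eta /\ xi <> eta.

(* v is a vertex of the bi-infinite geodesic joining xi and eta (xi <> eta):
   v is a prefix of xi or eta of length >= the length of their common prefix. *)
Definition onGeod (xi eta : bpoint) (v : word) : Prop :=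
  (prefI v xi \/ prefI v eta) /\
  ~ (prefI v xi /\ prefI v eta /\ xi (size v) = eta (size v)).

Definition Conv (S : bset) (v : word) : Prop :=
  exists xi eta, S xi /\ S eta /\ xi <> eta /\ onGeod xi eta v.

(* v is a vertex of the geodesic ray from the vertex x to the end xi. *)
Definition onRay (x : word) (xi : bpoint) (v : word) : Prop :=
  (prefF v x \/ prefI v xi) /\
  ~ (prefI v xi /\ prefF (rcons v (xi (size v))) x).

(* Cyl(e) for the oriented edge e = (x,u): ends of geodesic rays from x whose
   first edge is e. *)
Definition Cyl (x u : word) (xi : bpoint) : Prop :=
  adj x u /\ redInf xi /\ onRay x xi u.

Definition vset := word -> Prop.

Fixpoint walkIn (T : vset) (u : word) (p : seq word) (v : word) : Prop :=
  match p with
  | [::] => u = v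
  | w :: p' => adj u w /\ T w /\ walkIn T w p' v
  end.

(* A finite subtree of X, given by its vertex set (connected induced subgraph). *)
Definition finSubtree (T : vset) : Prop :=
  (forall v, T v -> reduced v) /\
  (exists s : seq word, forall v, T v -> v \in s) /\
  (forall u v, T u -> T v -> exists p, walkIn T u p v).

Definition Sub1 (T : vset) : Prop := finSubtree T /\ T [::].

Definition deg1 (T : vset) (u : word) : Prop :=
  exists x, T x /\ adj u x /\ forall y, T y -> adj u y -> y = x.

(* Round graphs of grade r based at 1; d_X(1,u) = size u for reduced u. *)
Definition round (r : nat) (T : vset) : Prop :=
  Sub1 T /\
  (exists a b, a <> b /\ T a /\ T b /\ adj [::] a /\ adj [::] b) /\
  (forall u, T u -> deg1 T u -> size u = r).

Definition terminal (T : vset) (x u : word) : Prop :=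
  T x /\ T u /\ adj x u /\ deg1 T u.

Definition SCyl (T : vset) (S : bset) : Prop :=
  CN S /\
  (forall xi, S xi -> exists x u, terminal T x u /\ Cyl x u xi) /\
  (forall x u, terminal T x u -> exists xi, S xi /\ Cyl x u xi).

Definition RT (T : vset) (S1 S2 : bset) : Prop :=
  CN S1 /\ CN S2 /\ forall v, (Conv S1 v /\ Conv S2 v) <-> T v.

End FreeTree.

(* For S in C_N write hull S for the union of the geodesic rays from 1 to the
   points of S, i.e. the set of finite prefixes of points of S.  If 1 lies in
   Conv(S), then Conv(S) = hull S, and the part of hull S in the ball B(1, r+1)
   is a round graph of grade r+1 whose terminal edges are exactly the edges of
   hull S leaving the sphere of radius r, so S is in its SCyl.  Conversely, a
   round graph T' of grade r+1 with S in SCyl(T') is forced to be this truncated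
   hull, and its two edges at 1 put 1 in Conv(S).  Since T lies in B(1, r), a
   vertex common to two hulls but outside B(1, r+1) would have its prefix of
   length r+1 in T; so the hulls meet in T exactly when their truncations do.
   This gives the decomposition, and disjointness because the round graphs are
   recovered from S1 and S2. *)

From mathcomp Require Import all_boot.
From mathcomp Require Import zify.
From Stdlib Require Import Classical.

Set Implicit Arguments. Unset Strict Implicit. Unset Printing Implicit Defensive.

Section RoundGraphs.
Variable N : nat.
Implicit Types (u v w x : word N) (l : letter N) (xi eta : bpoint N)
  (T : vset N) (S : bset N).

Definition hull S : vset N := fun v => exists2 xi, S xi & prefI v xi.

Definition hull_ball (r : nat) S : vset N := fun v => hull S v /\ size v <= r.

Lemma prefIP v xi : prefI v xi <-> forall i, i < size v -> nth (xi 0) v i = xi i.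
Proof.
split=> [Hv i lt_iv | Hv]; first by rewrite Hv nth_mkseq.
apply: (eq_from_nth (x0 := xi 0)); rewrite ?size_mkseq // => i lt_iv.
by rewrite nth_mkseq // Hv.
Qed.

Lemma prefI_take k v xi : prefI v xi -> prefI (take k v) xi.
Proof.
move/prefIP=> Hv; apply/prefIP => i; rewrite size_take_min leq_min => /andP [ik iv].
by rewrite nth_take // Hv.
Qed.

Lemma prefI_rcons v xi : prefI v xi -> prefI (rcons v (xi (size v))) xi.
Proof. by rewrite /prefI size_rcons mkseqS => <-. Qed.

Lemma prefI_size_eq v w xi : prefI v xi -> prefI w xi -> size w <= size v ->
  w = take (size w) v.
Proof.
move=> /prefIP Hv /prefIP Hw le_wv.
apply: (eq_from_nth (x0 := xi 0)); first by rewrite size_takel.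
by move=> i lt_iw; rewrite nth_take // Hw // Hv // (leq_trans lt_iw).
Qed.

Lemma prefI_head v xi eta : prefI v xi -> prefI v eta -> 0 < size v ->
  xi 0 = eta 0.
Proof.
rewrite /prefI => Exi Eeta; by case: (size v) Exi Eeta => // n -> [].
Qed.

Lemma prefF_size v u : prefF v u -> size v <= size u.
Proof. by move->; rewrite size_take_min geq_minr. Qed.

Lemma prefF_rcons w l : prefF w (rcons w l).
Proof. by rewrite /prefF -cats1 take_size_cat. Qed.

Lemma prefF_prefI w u xi : prefF w u -> prefI u xi -> prefI w xi.
Proof. by move-> => /prefI_take. Qed.

Lemma prefF_trans w c u : prefF w c -> prefF c u -> prefF w u.
Proof.
move=> Ewc Ecu; rewrite /prefF {1}Ewc {1}Ecu take_takel //.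
exact: prefF_size.
Qed.

Lemma prefI_reduced v xi : redInf xi -> prefI v xi -> reduced v.
Proof.
move=> red_xi ->; case: (size v) => // n; rewrite /mkseq /=.
elim: n 0 => // n IHn k /=.
by rewrite red_xi IHn.
Qed.

Lemma walkIn_cat T u p w q v :
  walkIn T u p w -> walkIn T w q v -> walkIn T u (p ++ q) v.
Proof.
elim: p u => [|y p IHp] u /=; first by move->.
by case=> adj_uy [Ty walk_y] walk_w; do 2!split=> //; apply: IHp.
Qed.

Lemma walkIn_take T u p v k : walkIn T u p v -> k <= size v ->
  (k <= size u /\ take k v = take k u) \/ T (take k v).
Proof.
elim: p u => [|w p IHp] u /=; first by move=> -> le_kv; left.
case=> adj_uw [Tw walk_w] le_kv.
case: (IHp w walk_w le_kv) => [[le_kw ->]|]; last by right.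
case: adj_uw => [[l Ew]|[l Eu]]; subst.
- rewrite size_rcons in le_kw.
  case: (leqP k (size u)) => le_ku.
    by left; rewrite -cats1 takel_cat.
  by right; rewrite take_oversize // size_rcons.
- by left; rewrite size_rcons -cats1 takel_cat // (leqW le_kw).
Qed.

Lemma Sub1_take T v k : Sub1 T -> T v -> T (take k v).
Proof.
case=> [[_ [_ connT]] T0] Tv.
have [p walk_p] := connT _ _ T0 Tv.
case: (leqP k (size v)) => le_kv; last by rewrite take_oversize // ltnW.
case: (walkIn_take walk_p le_kv) => // [[+ _]].
by rewrite leqn0 => /eqP ->; rewrite take0.
Qed.

Lemma Sub1_belast T w l : Sub1 T -> T (rcons w l) -> T w.
Proof. by move=> subT /(Sub1_take (size w) subT); rewrite -cats1 take_size_cat. Qed.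

Lemma walkIn_root T v : (forall w k, T w -> T (take k w)) -> T v ->
  (exists p, walkIn T [::] p v) /\ (exists p, walkIn T v p [::]).
Proof.
move=> takeT; elim/last_ind: v => [|v l IHv] Tvl; first by split; exists [::].
have Tv : T v by have := takeT _ (size v) Tvl; rewrite -cats1 take_size_cat.
have [[p walk_p] [q walk_q]] := IHv Tv; split.
- exists (rcons p (rcons v l)); rewrite -cats1; apply: (walkIn_cat walk_p) => /=.
  by split; [left; exists l | split].
- by exists (v :: q) => /=; split; [right; exists l | split].
Qed.

Fixpoint words_upto n : seq (word N) :=
  if n is m.+1 then [::] :: [seq l :: w | l <- enum {: letter N}, w <- words_upto m]
  else [:: [::]].

Lemma mem_words_upto n w : size w <= n -> w \in words_upto n.
Proof.
elim: n w => [|n IHn] [|l w] //= le_wn.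
rewrite in_cons; apply/orP; right.
by apply: (allpairs_f (fun l (w : word N) => l :: w)); [rewrite mem_enum | apply: IHn].
Qed.

Lemma seq_size_bound (s : seq (word N)) : exists M, forall w, w \in s -> size w <= M.
Proof.
exists (\max_(w <- s) size w) => w w_in_s.
by rewrite (big_rem w) //= leq_maxl.
Qed.

Lemma deg1_adj_uniq T u y1 y2 :
  deg1 T u -> T y1 -> adj u y1 -> T y2 -> adj u y2 -> y1 = y2.
Proof. by case=> x [_ [_ Hx]] T1 A1 T2 A2; rewrite (Hx y1) // (Hx y2). Qed.

Lemma childless_deg1 T w l : Sub1 T -> T (rcons w l) ->
  ~ (exists l', T (rcons (rcons w l) l')) -> deg1 T (rcons w l).
Proof.
move=> subT Twl no_child; exists w; split; first exact: Sub1_belast subT Twl.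
split=> [|y Ty]; first by right; exists l.
case=> [[l' Ey]|[l' /rcons_inj [-> _]]] //.
by case: no_child; exists l'; rewrite -Ey.
Qed.

Lemma Sub1_leaf_above T w l : Sub1 T -> T (rcons w l) ->
  exists u, [/\ T u, prefF (rcons w l) u & deg1 T u].
Proof.
move=> subT; have [[_ [[s Ts] _]] _] := subT; have [M leM] := seq_size_bound s.
move: {2}(M - size (rcons w l)) (leqnn (M - size (rcons w l))) => n.
elim: n w l => [|n IHn] w l le_n Twl;
  case: (classic (exists l', T (rcons (rcons w l) l'))) => [[l' Tc]|no_child];
  try by exists (rcons w l); split=> //;
        [rewrite /prefF take_size | exact: childless_deg1].
- by have := leM _ (Ts _ Tc); move: le_n; rewrite !size_rcons; lia.
- have [|u [Tu Pu Du]] := IHn _ _ _ Tc; first by move: le_n; rewrite !size_rcons; lia.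
  by exists u; split=> //; apply: prefF_trans (prefF_rcons _ _) Pu.
Qed.

Lemma round_size_le r T v : round r T -> T v -> size v <= r.
Proof.
case=> subT [_ leaf_size]; case/lastP: v => // v l Tvl.
have [u [Tu Pu Du]] := Sub1_leaf_above subT Tvl.
by rewrite -(leaf_size _ Tu Du) prefF_size.
Qed.

Lemma Cyl_rcons_prefI x l xi : Cyl x (rcons x l) xi -> prefI (rcons x l) xi.
Proof.
case=> _ [_ [[pref_x|//] _]].
by have := prefF_size pref_x; rewrite size_rcons ltnn.
Qed.

Lemma prefI_Cyl_rcons x l xi :
  redInf xi -> prefI (rcons x l) xi -> Cyl x (rcons x l) xi.
Proof.
move=> red_xi pref_xi; split; first by left; exists l.
do 2!split=> //; first by right.
by case=> _ /prefF_size; rewrite !size_rcons; lia.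
Qed.

Lemma adj_nil a : adj [::] a -> exists l, a = [:: l].
Proof. by case=> [[l ->]|[l /(congr1 size)]]; [exists l | rewrite size_rcons]. Qed.

Lemma hull_take S v k : hull S v -> hull S (take k v).
Proof. by case=> xi Sxi /(prefI_take k); exists xi. Qed.

Lemma hull_ball_take r S v k : hull_ball r S v -> hull_ball r S (take k v).
Proof.
case=> /(hull_take k) hull_vk le_vr; split=> //.
by rewrite size_take_min (leq_trans (geq_minr _ _) le_vr).
Qed.

(* Once [1] lies on a geodesic between two points of [S], every ray from [1] to a
   point of [S] can be continued through [1] by a ray to a point of [S] leaving [1]
   by another first letter. *)
Lemma Conv_hull S : Conv S [::] -> forall v, Conv S v <-> hull S v.
Proof.
move=> conv_root v; split.
  by case=> xi [eta [Sxi [Seta [_ [[pxi|peta] _]]]]]; [exists xi | exists eta].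
case: v => [_|l v [xi Sxi pref_xi]]; first exact: conv_root.
have [zeta Szeta ne_xi_zeta] : exists2 zeta, S zeta & xi 0 != zeta 0.
  case: conv_root => xi1 [xi2 [S1 [S2 [_ [_ split12]]]]].
  case: (eqVneq (xi 0) (xi1 0)) => [E|]; last by exists xi1.
  by exists xi2; rewrite // E; apply/eqP => E12; apply: split12.
exists xi, zeta; do 3!split=> //; first by move=> E; rewrite E eqxx in ne_xi_zeta.
split; first by left.
by case=> pxi [pzeta _]; rewrite (prefI_head pxi pzeta) ?eqxx in ne_xi_zeta.
Qed.

Lemma Sub1_hull_ball r S : CN S -> Sub1 (hull_ball r S).
Proof.
case=> red_S [_ [xi0 [_ [Sxi0 _]]]]; split; last by split=> //; exists xi0.
split; first by move=> v [[xi Sxi pxi] _]; apply: prefI_reduced (red_S _ Sxi) pxi.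
split; first by exists (words_upto r) => v [_]; apply: mem_words_upto.
move=> u v Tu Tv.
have takeT w k : hull_ball r S w -> hull_ball r S (take k w) by apply: hull_ball_take.
have [_ [q walk_q]] := walkIn_root takeT Tu; have [[p walk_p] _] := walkIn_root takeT Tv.
by exists (q ++ p); apply: walkIn_cat walk_q walk_p.
Qed.

Lemma hull_ball_root_branches r S : Conv S [::] ->
  exists a b, a <> b /\ hull_ball r.+1 S a /\ hull_ball r.+1 S b /\
              adj [::] a /\ adj [::] b.
Proof.
case=> xi [eta [Sxi [Seta [_ [_ split_root]]]]].
exists [:: xi 0], [:: eta 0]; split; first by case=> E; apply: split_root.
split; first by split=> //; exists xi.
split; first by split=> //; exists eta.
by split; left; [exists (xi 0) | exists (eta 0)].
Qed.

Lemma hull_ball_leaf_size r S u : Conv S [::] ->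
  hull_ball r.+1 S u -> deg1 (hull_ball r.+1 S) u -> size u = r.+1.
Proof.
move=> conv_root Tu Du; have [[xi Sxi pxi] le_u] := Tu.
case: (ltnP (size u) r.+1) => [lt_u|ge_u]; last by apply/eqP; rewrite eqn_leq le_u.
have Tc : hull_ball r.+1 S (rcons u (xi (size u))).
  by split; [exists xi; last apply: prefI_rcons | rewrite size_rcons].
have Ac : adj u (rcons u (xi (size u))) by left; exists (xi (size u)).
case/lastP: u {le_u lt_u pxi} Tu Du Tc Ac => [|u' l] Tu Du Tc Ac.
  have [a [b [ne_ab [Ta [Tb [Aa Ab]]]]]] := hull_ball_root_branches r conv_root.
  by case: ne_ab; apply: deg1_adj_uniq Du Ta Aa Tb Ab.
have Tu' : hull_ball r.+1 S u'.
  by have := hull_ball_take (size u') Tu; rewrite -cats1 take_size_cat.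
have Au' : adj (rcons u' l) u' by right; exists l.
by have := congr1 size (deg1_adj_uniq Du Tc Ac Tu' Au'); rewrite !size_rcons; lia.
Qed.

Lemma round_hull_ball r S : CN S -> Conv S [::] -> round r.+1 (hull_ball r.+1 S).
Proof.
move=> CN_S conv_root; split; first exact: Sub1_hull_ball.
by split; [apply: hull_ball_root_branches | move=> u; apply: hull_ball_leaf_size].
Qed.

Lemma hull_ball_top_terminal r S x l : size x = r ->
  hull_ball r.+1 S (rcons x l) -> terminal (hull_ball r.+1 S) x (rcons x l).
Proof.
move=> size_x Txl.
have Tx : hull_ball r.+1 S x.
  by have := hull_ball_take (size x) Txl; rewrite -cats1 take_size_cat.
split=> //; split=> //; split; first by left; exists l.
exists x; split=> //; split; first by right; exists l.
move=> y [_ le_y] [[l' Ey]|[l' /rcons_inj [] //]].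
by move: le_y; rewrite Ey !size_rcons size_x ltnn.
Qed.

Lemma SCyl_hull_ball r S : CN S -> Conv S [::] -> SCyl (hull_ball r.+1 S) S.
Proof.
move=> CN_S conv_root; have [red_S _] := CN_S.
split=> //; split=> [xi Sxi | x u [Tx [Tu [Axu Du]]]].
  have pref_xi : prefI (rcons (mkseq xi r) (xi r)) xi.
    by rewrite -mkseqS /prefI size_mkseq.
  exists (mkseq xi r), (rcons (mkseq xi r) (xi r)); split.
    apply: hull_ball_top_terminal; first by rewrite size_mkseq.
    by split; [exists xi | rewrite size_rcons size_mkseq].
  exact: prefI_Cyl_rcons (red_S _ Sxi) pref_xi.
have size_u := hull_ball_leaf_size conv_root Tu Du.
case: Axu => [[l Eu]|[l Ex]]; subst.
  case: Tu => [[xi Sxi pxi] _]; exists xi.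
  by split; last exact: prefI_Cyl_rcons (red_S _ Sxi) pxi.
by case: Tx => _; rewrite size_rcons size_u ltnn.
Qed.

Lemma SCyl_sub_hull T S v : Sub1 T -> SCyl T S -> T v -> hull S v.
Proof.
move=> subT [[_ [_ [xi0 [_ [Sxi0 _]]]]] [_ cyl_terminal]].
case/lastP: v => [_|v l Tvl]; first by exists xi0.
have [u [Tu Pu Du]] := Sub1_leaf_above subT Tvl.
case/lastP: u Tu Pu Du => [_ /prefF_size|x l' Tu Pu Du]; first by rewrite size_rcons.
have Tx := Sub1_belast subT Tu.
have [|xi [Sxi Cxi]] := cyl_terminal x (rcons x l').
  by do 3!split=> //; left; exists l'.
by exists xi; last exact: prefF_prefI Pu (Cyl_rcons_prefI Cxi).
Qed.

Lemma round_SCylE r T S : round r T -> SCyl T S -> forall v, T v <-> hull_ball r S v.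
Proof.
move=> roundT SCylT; have [subT [_ leaf_size]] := roundT.
move=> v; split=> [Tv | [[xi Sxi pxi] le_v]].
  by split; [apply: SCyl_sub_hull Tv | apply: round_size_le Tv].
have [x [u [[Tx [Tu [Axu Du]]] Cxi]]] := SCylT.2.1 _ Sxi.
have size_u := leaf_size _ Tu Du.
case: Axu => [[l Eu]|[l Ex]]; [subst u | subst x].
  rewrite (prefI_size_eq (Cyl_rcons_prefI Cxi) pxi) ?size_u //.
  exact: Sub1_take.
by have := round_size_le roundT Tx; rewrite size_rcons size_u ltnn.
Qed.

Lemma round_SCyl_Conv_root r T S : round r T -> SCyl T S -> Conv S [::].
Proof.
move=> [subT [[a [b [ne_ab [Ta [Tb [Aa Ab]]]]]] _]] SCylT.
have [la Ea] := adj_nil Aa; have [lb Eb] := adj_nil Ab; subst.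
have [xi Sxi [Exi]] := SCyl_sub_hull subT SCylT Ta.
have [eta Seta [Eeta]] := SCyl_sub_hull subT SCylT Tb.
exists xi, eta; do 2!split=> //.
split; first by move=> E; apply: ne_ab; rewrite Exi Eeta E.
split; first by left.
by case=> _ [_ /= E]; apply: ne_ab; rewrite Exi Eeta E.
Qed.

Lemma hull_meet_ball r T S1 S2 : (forall v, T v -> size v <= r) ->
  (forall v, hull S1 v /\ hull S2 v <-> T v) <->
  (forall v, hull_ball r.+1 S1 v /\ hull_ball r.+1 S2 v <-> T v).
Proof.
move=> T_le; split=> meetT v.
  split=> [[[H1 _] [H2 _]] | Tv]; first exact/meetT.
  by have [H1 H2] := proj2 (meetT v) Tv; have := leqW (T_le _ Tv); do 2!split.
split=> [[H1 H2] | /meetT [[H1 _] [H2 _]] //].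
case: (leqP (size v) r.+1) => [le_v | gt_v]; first exact/meetT.
have size_vr : size (take r.+1 v) = r.+1 by rewrite size_takel // ltnW.
suff /T_le : T (take r.+1 v) by rewrite size_vr ltnn.
by apply/meetT; split; split; rewrite ?size_vr //; apply: hull_take.
Qed.

End RoundGraphs.

Theorem mainTheorem9 (N : nat) (hN : 2 <= N) (T : vset N) (r : nat)
  (hT : Sub1 T) (hr : 0 < r) (hTB : forall v, T v -> size v <= r) :
  (forall S1 S2 : bset N,
     RT T S1 S2 <->
     exists T1 T2 : vset N,
       [/\ round (r.+1) T1, round (r.+1) T2,
           (forall v, (T1 v /\ T2 v) <-> T v),
           SCyl T1 S1 & SCyl T2 S2]) /\
  (forall (T1 T2 T1' T2' : vset N) (S1 S2 : bset N),
     round (r.+1) T1 -> round (r.+1) T2 ->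
     round (r.+1) T1' -> round (r.+1) T2' ->
     (forall v, (T1 v /\ T2 v) <-> T v) ->
     (forall v, (T1' v /\ T2' v) <-> T v) ->
     SCyl T1 S1 -> SCyl T2 S2 -> SCyl T1' S1 -> SCyl T2' S2 ->
     (forall v, T1 v <-> T1' v) /\ (forall v, T2 v <-> T2' v)).
Proof.
split=> [S1 S2|T1 T2 T1' T2' S1 S2 R1 R2 R1' R2' _ _ SC1 SC2 SC1' SC2']; last first.
  by split=> v; rewrite (round_SCylE R1 SC1) (round_SCylE R1' SC1')
                     || rewrite (round_SCylE R2 SC2) (round_SCylE R2' SC2').
split=> [[CN1 [CN2 convT]] | [T1 [T2 [R1 R2 meetT SC1 SC2]]]].
  have [C1 C2] := proj2 (convT [::]) (proj2 hT).
  exists (hull_ball r.+1 S1), (hull_ball r.+1 S2).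
  split; try exact: round_hull_ball; try exact: SCyl_hull_ball.
  apply/(hull_meet_ball _ _ hTB) => v.
  by rewrite -(Conv_hull C1) -(Conv_hull C2).
have C1 := round_SCyl_Conv_root R1 SC1; have C2 := round_SCyl_Conv_root R2 SC2.
have meet_hull : forall v, hull S1 v /\ hull S2 v <-> T v.
  apply/(hull_meet_ball _ _ hTB) => v.
  by rewrite -(round_SCylE R1 SC1) -(round_SCylE R2 SC2).
split; first exact: SC1.1.
split; first exact: SC2.1.
by move=> v; rewrite (Conv_hull C1) (Conv_hull C2).
Qed.
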